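(* Let $n,p,q,c,d$ be nonnegative integers. Then \[ \sum_{k=0}^n \binom{p+k}{p}\binom{q+n-k}{q}\binom{k}{c}\binom{n-k}{d}H_{p+k} = \binom{n+p+q+1}{n-c-d}\binom{p+c}{c}\binom{q+d}{d}\bigl(H_{n+p+q+1}-H_{p+q+c+d+1}+H_{p+c}\bigr). \]
   Context: For a nonnegative integer $N$, $H_N=\sum_{j=1}^N \frac1j$ (so $H_0=0$). For integers $r$ and $j$, $\binom{r}{j}=\frac{r(r-1)\cdots(r-j+1)}{j!}$ if $j\ge 0$ and $\binom{r}{j}=0$ if $j<0$. *)

From mathcomp Require Import all_boot all_order all_algebra.
Set Implicit Arguments. Unset Strict Implicit. Unset Printing Implicit Defensive.
Import Order.TTheory GRing.Theory Num.Theory.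
Local Open Scope ring_scope.

Definition harm (N : nat) : rat := \sum_(1 <= j < N.+1) (j%:R)^-1.

Definition binz (r : nat) (j : int) : nat :=
  match j with
  | Posz m => 'C(r, m)
  | Negz _ => 0%N
  end.

From mathcomp Require Import all_boot all_order all_algebra.
From mathcomp Require Import ring zify.
Import Order.TTheory GRing.Theory Num.Theory.
Local Open Scope ring_scope.

(* Trinomial revision C(p+k,p) C(k,c) = C(p+c,c) C(p+k,p+c) pulls the
   k-independent factor C(p+c,c) C(q+d,d) out of the sum, which becomes
   S(M,A,B) = sum_m C(m,A) C(M-m,B) H_m with A = p+c, B = q+d, M = n+p+q
   (the added terms vanish).  Then S(M,A,B) = C(M+1,A+B+1)(H_(M+1) - H_(A+B+1) + H_A)
   by induction on M and B: the left side satisfies Pascal's recurrence in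
   (M, B), and so does the right side, thanks to the absorption identity
   C(M+2,J+1)/(M+2) = C(M+1,J)/(J+1). *)

Lemma harm0 : harm 0 = 0.
Proof. by rewrite /harm big_geq. Qed.

Lemma harmS n : harm n.+1 = harm n + n.+1%:R^-1.
Proof. by rewrite /harm big_nat_recr. Qed.

Lemma bin_absorption (R : numFieldType) (n m : nat) :
  'C(n.+1, m.+1)%:R / n.+1%:R = 'C(n, m)%:R / m.+1%:R :> R.
Proof.
have /(congr1 (fun k : nat => k%:R : R)) := mul_bin_diag n.+1 m.
rewrite !natrM /= => diag.
by apply/eqP; rewrite eqr_div ?pnatr_eq0 // mulrC -diag mulrC.
Qed.

Lemma bin_trinomial (a b c : nat) :
  ('C(a + b, a) * 'C(b, c) = 'C(a + c, c) * 'C(a + b, a + c))%N.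
Proof.
have [lt_bc | le_cb] := ltnP b c.
  by rewrite (bin_small lt_bc) (@bin_small (a + b) (a + c)) ?muln0 // ltn_add2l.
have fact_pos : (0 < a`! * c`! * (b - c)`!)%N by rewrite !muln_gt0 !fact_gt0.
apply/eqP; rewrite -(eqn_pmul2r fact_pos); apply/eqP.
have := bin_fact (leq_addr b a); rewrite addKn => fact_ab.
have := bin_fact (leq_addl a c); rewrite addnK => fact_ac.
have := @bin_fact (a + b) (a + c); rewrite leq_add2l subnDl => /(_ le_cb) fact_abc.
transitivity ('C(a + b, a) * (a`! * ('C(b, c) * (c`! * (b - c)`!))))%N; first by ring.
rewrite bin_fact // fact_ab -fact_abc -fact_ac; ring.
Qed.

Lemma binz_subr (N K : nat) : binz N (N%:Z - K%:Z) = 'C(N, K).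
Proof.
case E: (N%:Z - K%:Z) => [m|m] /=.
  have -> : m = (N - K)%N by lia.
  by rewrite bin_sub //; lia.
by rewrite bin_small //; lia.
Qed.

Lemma harm_bin_pascal (x : rat) (M J : nat) :
  'C(M.+2, J.+1)%:R * (harm M.+2 - harm J.+1 + x)
  = 'C(M.+1, J.+1)%:R * (harm M.+1 - harm J.+1 + x)
    + 'C(M.+1, J)%:R * (harm M.+1 - harm J + x).
Proof.
have absorb := bin_absorption rat M.+1 J; rewrite binS natrD in absorb.
rewrite (harmS M.+1) (harmS J) binS natrD.
set a := 'C(M.+1, J.+1)%:R; set b := 'C(M.+1, J)%:R.
apply/eqP; rewrite -subr_eq0; apply/eqP.
transitivity ((a + b) / M.+2%:R - b / J.+1%:R); first by ring.
by rewrite absorb subrr.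
Qed.

Lemma sum_bin_harm (A B M : nat) :
  \sum_(0 <= m < M.+1) ('C(m, A) * 'C(M - m, B))%:R * harm m
  = 'C(M.+1, A + B + 1)%:R * (harm M.+1 - harm (A + B + 1) + harm A).
Proof.
elim: M B => [|M IH] B.
  rewrite big_nat1 harm0 mulr0.
  have [AB0 | AB_gt0] := posnP (A + B).
    have [-> ->] : A = 0%N /\ B = 0%N by lia.
    by rewrite subrr add0r harm0 mulr0.
  by rewrite bin_small ?mul0r //; lia.
rewrite big_nat_recr //= subnn.
case: B => [|B].
  rewrite (eq_bigr (fun m => ('C(m, A) * 'C(M - m, 0))%:R * harm m)) => [|m _];
    last by rewrite !bin0.
  by rewrite IH bin0 muln1 !addn0 addn1 harm_bin_pascal subrK.
rewrite bin0n muln0 mul0r addr0.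
under eq_big_nat => m /andP [_ le_mM] do
  rewrite subSn // binS mulnDr natrD mulrDl.
by rewrite big_split /= !IH (addnS A B) addSn harm_bin_pascal.
Qed.

Lemma sum_bin_harm_widen (n p q P Q : nat) : (p <= P)%N -> (q <= Q)%N ->
  \sum_(0 <= k < n.+1) ('C(p + k, P) * 'C(q + (n - k), Q))%:R * harm (p + k)
  = \sum_(0 <= m < (n + p + q).+1) ('C(m, P) * 'C(n + p + q - m, Q))%:R * harm m.
Proof.
move=> le_pP le_qQ.
set F := fun m => ('C(m, P) * 'C(n + p + q - m, Q))%:R * harm m.
have F_below : \sum_(0 <= m < p) F m = 0.
  rewrite big1_seq // => m /andP [_]; rewrite mem_index_iota => /andP [_ lt_mp].
  by rewrite /F bin_small ?mul0n ?mul0r //; lia.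
have F_above : \sum_(p + n.+1 <= m < (n + p + q).+1) F m = 0.
  rewrite big1_seq // => m /andP [_]; rewrite mem_index_iota => /andP [lo_m hi_m].
  by rewrite /F (@bin_small _ Q) ?muln0 ?mul0r //; lia.
rewrite [RHS](@big_cat_nat _ _ _ p) /=; [|lia|lia].
rewrite [in RHS](@big_cat_nat _ _ _ (p + n.+1) p) /=; [|lia|lia].
rewrite F_below F_above add0r addr0 /F (big_addn 0 _ p) addKn; apply: eq_big_nat => k /andP [_ lt_kn].
have -> : (n + p + q - (k + p) = q + (n - k))%N by lia.
by rewrite addnC.
Qed.

Theorem mainTheorem4 (n p q c d : nat) :
  \sum_(0 <= k < n.+1)
     ('C(p + k, p) * 'C(q + (n - k), q) * 'C(k, c) * 'C(n - k, d))%:R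
       * harm (p + k)
  = (binz (n + p + q + 1) (n%:Z - c%:Z - d%:Z) * 'C(p + c, c) * 'C(q + d, d))%:R
      * (harm (n + p + q + 1) - harm (p + q + c + d + 1) + harm (p + c)).
Proof.
have summand k : ('C(p + k, p) * 'C(q + (n - k), q) * 'C(k, c) * 'C(n - k, d)
    = ('C(p + c, c) * 'C(q + d, d)) * ('C(p + k, p + c) * 'C(q + (n - k), q + d)))%N.
  by rewrite -mulnA mulnACA (bin_trinomial p k c) (bin_trinomial q (n - k) d) mulnACA.
under eq_bigr do rewrite summand natrM -mulrA.
rewrite -mulr_sumr sum_bin_harm_widen ?leq_addr // sum_bin_harm.
have -> : n%:Z - c%:Z - d%:Z = (n + p + q + 1)%N%:Z - (p + q + c + d + 1)%N%:Z.
  by rewrite !PoszD; ring.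
have -> : (p + c + (q + d) + 1 = p + q + c + d + 1)%N by ring.
rewrite binz_subr -[(n + p + q).+1]addn1.
by rewrite mulrA -natrM; congr (_%:R * _); ring.
Qed.
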